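(* In the setting of a generic triple $(F,G,H)$ of decorated flags in an $m$-dimensional space $V$ with volume form $\omega$, for all nonnegative integers $a,b,c$ with $a+b+c=m$ and $(a,b,c)\notin\{(m,0,0),(0,m,0),(0,0,m)\}$, $$\Delta^\ast_{a,b,c}:=\langle\omega^\ast,\ \ast f_{(m-a)}\wedge\ast g_{(m-b)}\wedge\ast h_{(m-c)}\rangle=\Delta^b_{c,0,a}.$$ That is, the coordinate $\Delta_{a,b,c}$ of the dual configuration $(\ast F,\ast G,\ast H)$ equals $\Delta^b_{c,0,a}$.
   Context: $V^\ast$ is the dual space and $\omega^\ast$ the volume form on $V^\ast$ with $\langle\omega^\ast,\omega\rangle=1$, where $\langle\cdot,\cdot\rangle:\wedge^kV\times\wedge^kV^\ast\to\mathbb Q$ is $\langle v_1\wedge\cdots\wedge v_k,\phi_1\wedge\cdots\wedge\phi_k\rangle=\det(\langle v_i,\phi_j\rangle)$. The isomorphism $\ast:\wedge^kV\to\wedge^{m-k}V^\ast$ is defined by $\langle v,\ast u\rangle=\langle u\wedge v,\omega\rangle$ for $v\in\wedge^{m-k}V$. A decorated flag is $F_1\subset\cdots\subset F_{m-1}$ with nonzero $f_{(i)}\in\wedge^iF_i$; $f_{(0)}=1$, $f_{(m)}$ normalized by $\langle f_{(m)},\omega\rangle=1$; its dual $\ast F$ is the flag $F_{m-1}^\perp\subset\cdots\subset F_1^\perp$ in $V^\ast$ with decorations $\ast f_{(m-k)}$. For generic $(F,G)$ there is a basis $f_1,\dots,f_m$ with $f_k\in F_k\cap G_{m+1-k}$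 and $f_{(k)}=f_1\wedge\cdots\wedge f_k$; for generic $(G,H)$ a basis $h_1,\dots,h_m$ with $h_k\in G_{m+1-k}\cap H_k$ and $h_{(k)}=h_k\wedge\cdots\wedge h_1$. Put $f_{s,(k)}=f_{s+1}\wedge\cdots\wedge f_{s+k}$, $h_{(k),s}=h_{s+k}\wedge\cdots\wedge h_{s+1}$, and for $a'+b'+c'=m-s$ define $\Delta^s_{a',b',c'}:=\langle f_{s,(a')}\wedge g_{(b')}\wedge h_{(c'),s},\omega_s\rangle$ where $\omega_s$ is the volume form on $G_{m-s}$ with $\langle g_{(m-s)},\omega_s\rangle=\langle f_{(s)}\wedge g_{(m-s)},\omega\rangle\langle g_{(m-s)}\wedge h_{(s)},\omega\rangle$. *)

(* Linear algebra over the rationals Q (as in the paper's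
   pairing  /\^k V x /\^k V^* -> Q).  V = Q^m (row vectors), with the standard
   volume form omega = e^1 /\ ... /\ e^m; every (V, omega) is isomorphic to this. *)
From HB Require Import structures.
From mathcomp Require Import all_boot all_order all_algebra.
Set Implicit Arguments. Unset Strict Implicit. Unset Printing Implicit Defensive.
Import Order.TTheory GRing.Theory Num.Theory.
Local Open Scope ring_scope.

(* A multivector is given by its coordinates on the basis e_S = e_{s1} /\ ... /\ e_{sk},
   s1 < ... < sk.  The same type is used for /\V^* with the dual basis e^S. *)
Definition mv (m : nat) := {ffun {set 'I_m} -> rat}.

(* e_A /\ e_B = shuffle_sign A B * e_(A :|: B) for disjoint A, B *)
Definition shuffle_sign m (A B : {set 'I_m}) : rat :=
  (-1) ^+ #|[set p : 'I_m * 'I_m | [&& p.1 \in A, p.2 \in B & (p.2 < p.1)%N]]|.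

Definition wedge m (u v : mv m) : mv m :=
  [ffun S : {set 'I_m} => \sum_(A : {set 'I_m} | A \subset S)
                shuffle_sign A (S :\: A) * u A * v (S :\: A)].

Definition mv1 m : mv m := [ffun S : {set 'I_m} => (S == set0)%:R].

Definition mvec m (v : 'rV[rat]_m) : mv m :=
  [ffun S : {set 'I_m} => \sum_(i : 'I_m | S == [set i]) v 0 i].

Definition wedge_seq m (s : seq 'rV[rat]_m) : mv m :=
  foldr (fun v acc => wedge (mvec v) acc) (mv1 m) s.

Definition wedge_rows m k (M : 'M[rat]_(k, m)) : mv m :=
  wedge_seq [seq row i M | i <- enum 'I_k].

(* <u, phi> for u in /\V, phi in /\V^*: on homogeneous elements of the same
   degree k this is <v1../\vk, phi1/\../\phik> = det(<vi,phij>) (Cauchy-Binet). *)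
Definition pairing m (u phi : mv m) : rat := \sum_(S : {set 'I_m}) u S * phi S.

Definition basis_mv m (S : {set 'I_m}) : mv m := [ffun T : {set 'I_m} => (T == S)%:R].

Definition omega m : mv m := basis_mv [set: 'I_m].
Definition omega_star m : mv m := basis_mv [set: 'I_m].

(* Hodge-type star: <v, *u> = <u /\ v, omega> for all v, i.e. on the basis the
   coordinate of star u at S is <u /\ e_S, omega>. *)
Definition hodge m (u : mv m) : mv m :=
  [ffun S : {set 'I_m} => pairing (wedge u (basis_mv S)) (omega m)].

(* A decorated flag is a family D k : 'M_(k,m), k = 0..m:  F_k = row space of D k,
   decoration f_(k) = wedge of the rows of D k. *)
Definition decorated_flag m (D : forall k : nat, 'M[rat]_(k, m)) : Prop :=
  [/\ forall k, (0 < k < m)%N -> \rank (D k) = k,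
      forall k, (k < m)%N -> (D k <= D k.+1)%MS
    & pairing (wedge_rows (D m)) (omega m) = 1].

Definition dec m (D : forall k : nat, 'M[rat]_(k, m)) (k : nat) : mv m :=
  wedge_rows (D k).

Definition generic_triple m (F G H : forall k : nat, 'M[rat]_(k, m)) : Prop :=
  forall a b c, (a + b + c)%N = m ->
    \rank (col_mx (F a) (col_mx (G b) (H c))) = m.

Definition FG_basis m (F G : forall k : nat, 'M[rat]_(k, m)) (fv : nat -> 'rV[rat]_m) :=
  forall k, (1 <= k <= m)%N ->
    [/\ (fv k <= F k)%MS, (fv k <= G (m.+1 - k)%N)%MS
      & wedge_seq [seq fv i | i <- iota 1 k] = dec F k].

Definition GH_basis m (G H : forall k : nat, 'M[rat]_(k, m)) (hv : nat -> 'rV[rat]_m) :=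
  forall k, (1 <= k <= m)%N ->
    [/\ (hv k <= G (m.+1 - k)%N)%MS, (hv k <= H k)%MS
      & wedge_seq (rev [seq hv i | i <- iota 1 k]) = dec H k].

Definition f_s m (fv : nat -> 'rV[rat]_m) (s k : nat) : mv m :=
  wedge_seq [seq fv i | i <- iota s.+1 k].

Definition h_s m (hv : nat -> 'rV[rat]_m) (s k : nat) : mv m :=
  wedge_seq (rev [seq hv i | i <- iota s.+1 k]).

(* Evaluation <X, w> of the volume form w on the subspace W with top multivector
   g (g spans /\^top W) determined by <g, w> = N.  For X in /\^top W we have
   X = lambda g, and lambda is recovered as the coordinate ratio
   (sum_S X_S g_S) / (sum_S g_S^2); then <X, w> = lambda * N. *)
Definition vol_eval m (g : mv m) (N : rat) (X : mv m) : rat :=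
  N * (\sum_(S : {set 'I_m}) X S * g S / \sum_(S : {set 'I_m}) g S ^+ 2).

(* Delta^s_{a',b',c'} = <f_{s,(a')} /\ g_(b') /\ h_{(c'),s}, omega_s>, where
   omega_s is the volume form on G_(m-s) with
   <g_(m-s), omega_s> = <f_(s) /\ g_(m-s), omega> <g_(m-s) /\ h_(s), omega>. *)
Definition Delta_s m (F G H : forall k : nat, 'M[rat]_(k, m))
    (fv hv : nat -> 'rV[rat]_m) (s a' b' c' : nat) : rat :=
  let g := dec G (m - s)%N in
  let N := pairing (wedge (dec F s) g) (omega m) *
           pairing (wedge g (dec H s)) (omega m) in
  vol_eval g N (wedge (f_s fv s a') (wedge (dec G b') (h_s hv s c'))).

Definition Delta_star m (F G H : forall k : nat, 'M[rat]_(k, m)) (a b c : nat) : rat :=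
  pairing (omega_star m)
    (wedge (hodge (dec F (m - a)%N)) (wedge (hodge (dec G (m - b)%N)) (hodge (dec H (m - c)%N)))).

(* Let f_1, ..., f_m be the basis adapted to (F, G), of determinant 1, and
   q_1, ..., q_m its dual basis.  The Hodge star of f_1 /\ ... /\ f_k is
   q_(k+1) /\ ... /\ q_m, and cyclically rotating both bases shows that
   *f_(b+c) /\ *(f_(b+1) /\ ... /\ f_m) = *(f_(b+1) /\ ... /\ f_(b+c)).
   Since G_(m-b) is spanned by w = f_(b+1) /\ ... /\ f_m, both g_(m-b) and
   f_(b,(c)) /\ h_((a),b) are multiples lambda w and mu w.  Hence
   Delta^*_(a,b,c) = lambda <f_(b,(c)) /\ h_(a+b), omega> = lambda mu <w /\ h_(b), omega>,
   and in Delta^b_(c,0,a) the normalisation of omega_b contributes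
   lambda^2 <w /\ h_(b), omega> while the evaluation contributes mu / lambda. *)

From HB Require Import structures.
From mathcomp Require Import all_boot all_order all_algebra.
From mathcomp Require Import ring zify.
Set Implicit Arguments. Unset Strict Implicit. Unset Printing Implicit Defensive.
Import Order.TTheory GRing.Theory Num.Theory.
Local Open Scope ring_scope.

Section ExteriorAlgebra.
Variable m : nat.
Implicit Types (A B C D S : {set 'I_m}) (u v w : mv m).

Definition shuffle_inv A B :=
  #|[set p : 'I_m * 'I_m | [&& p.1 \in A, p.2 \in B & (p.2 < p.1)%N]]|.

Lemma shuffle_signE A B : shuffle_sign A B = (-1) ^+ shuffle_inv A B.
Proof. by []. Qed.

Lemma shuffle_invUl A B C : [disjoint A & B] ->
  shuffle_inv (A :|: B) C = (shuffle_inv A C + shuffle_inv B C)%N.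
Proof.
move=> dAB; rewrite /shuffle_inv.
set X := [set p | [&& p.1 \in A, _ & _]]; set Y := [set p | [&& p.1 \in B, _ & _]].
transitivity #|X :|: Y|; first by apply: eq_card => p; rewrite !inE -!andb_orl.
apply/eqP; rewrite (leq_card_setU X Y).2 -setI_eq0; apply/eqP/setP => p; rewrite !inE.
by case: (boolP (p.1 \in A)) => // /(disjointFr dAB) ->; rewrite andbF.
Qed.

Lemma shuffle_invUr A B C : [disjoint B & C] ->
  shuffle_inv A (B :|: C) = (shuffle_inv A B + shuffle_inv A C)%N.
Proof.
move=> dBC; rewrite /shuffle_inv.
set X := [set p | [&& _, p.2 \in B & _]]; set Y := [set p | [&& _, p.2 \in C & _]].
transitivity #|X :|: Y|.
  apply: eq_card => p; rewrite !inE.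
  by case: (p.1 \in A); case: (p.2 \in B); case: (p.2 \in C); case: (p.2 < p.1)%N.
apply/eqP; rewrite (leq_card_setU X Y).2 -setI_eq0; apply/eqP/setP => p; rewrite !inE.
by case: (boolP (p.2 \in B)) => [/(disjointFr dBC) ->|_]; rewrite ?andbF.
Qed.

Lemma wedgeE u v S : wedge u v S =
  \sum_(A : {set 'I_m} | A \subset S) shuffle_sign A (S :\: A) * u A * v (S :\: A).
Proof. by rewrite ffunE. Qed.

Lemma big_subset_setU (F : {set 'I_m} -> rat) B S : B \subset S ->
  \sum_(A : {set 'I_m} | (A \subset S) && (B \subset A)) F A =
  \sum_(C : {set 'I_m} | C \subset S :\: B) F (B :|: C).
Proof.
move=> BS; rewrite (reindex_onto (fun C => B :|: C) (fun A => A :\: B)); last first.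
  by move=> A /andP[_ BA]; rewrite -{2}(setID A B) (setIidPr BA).
apply: eq_bigl => C; rewrite subsetUl andbT subUset BS setDUl setDv set0U subsetD /=.
by congr (_ && _); apply: (sameP eqP setDidPl).
Qed.

Lemma wedgeA u v w : wedge (wedge u v) w = wedge u (wedge v w).
Proof.
apply/ffunP => S; rewrite !wedgeE.
under eq_bigr => A _ do rewrite wedgeE big_distrr big_distrl /=.
rewrite (exchange_big_dep (fun B => B \subset S)) /=; last first.
  by move=> A B AS BA; apply: subset_trans BA AS.
apply: eq_bigr => B BS; rewrite big_subset_setU // wedgeE big_distrr /=.
apply: eq_bigr => C CSB; have /subsetDP[_ dCB] := CSB.
have -> : (B :|: C) :\: B = C by rewrite setDUl setDv set0U; apply/setDidPl.
rewrite -setDDl; set D := (S :\: B) :\: C.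
have -> : S :\: B = C :|: D by rewrite /D -{1}(setID (S :\: B) C) (setIidPr CSB) setUC.
have dCD : [disjoint C & D] by apply/pred0P => x /=; rewrite !inE; case: (x \in C).
have dBD : [disjoint B & D] by apply/pred0P => x /=; rewrite !inE; case: (x \in B); rewrite ?andbF.
rewrite !shuffle_signE shuffle_invUl 1?disjoint_sym // shuffle_invUr // !exprD; ring.
Qed.

Lemma wedge1l v : wedge (mv1 m) v = v.
Proof.
apply/ffunP => S; rewrite wedgeE (bigD1 set0) ?sub0set //= big1 ?addr0.
  rewrite ffunE eqxx setD0 shuffle_signE /shuffle_inv.
  by rewrite (_ : [set p | _] = set0) ?cards0 ?mul1r //; apply/setP => p; rewrite !inE.
by move=> A /andP[_ hA]; rewrite ffunE (negbTE hA) mulr0 mul0r.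
Qed.

Definition mv_scale (c : rat) u : mv m := [ffun S => c * u S].

Lemma wedgeZl c u v : wedge (mv_scale c u) v = mv_scale c (wedge u v).
Proof.
by apply/ffunP => S; rewrite !ffunE big_distrr /=; apply: eq_bigr => A _; rewrite ffunE; ring.
Qed.

Lemma wedgeZr c u v : wedge u (mv_scale c v) = mv_scale c (wedge u v).
Proof.
by apply/ffunP => S; rewrite !ffunE big_distrr /=; apply: eq_bigr => A _; rewrite ffunE; ring.
Qed.

Lemma mv_scaleE c u S : mv_scale c u S = c * u S.
Proof. by rewrite ffunE. Qed.

Lemma mv_scaleA c d u : mv_scale c (mv_scale d u) = mv_scale (c * d) u.
Proof. by apply/ffunP => S; rewrite !ffunE mulrA. Qed.

Lemma mv_scale1 u : mv_scale 1 u = u.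
Proof. by apply/ffunP => S; rewrite ffunE mul1r. Qed.

Lemma wedge_seq_cat (s t : seq 'rV[rat]_m) :
  wedge_seq (s ++ t) = wedge (wedge_seq s) (wedge_seq t).
Proof. by elim: s => [|x s IH] /=; rewrite ?wedge1l // IH wedgeA. Qed.

End ExteriorAlgebra.

Section Minors.
Variable m : nat.
Implicit Types (S : {set 'I_m}) (W : mv m).

Definition setpos S (x : 'I_m) : nat := #|[set p in S | (p < x)%N]|.

Lemma shuffle_inv1 S x : shuffle_inv [set x] (S :\ x) = setpos S x.
Proof.
have pair_inj : injective (@pair 'I_m 'I_m x) by move=> ? ? /(congr1 snd).
rewrite /shuffle_inv /setpos -(card_imset _ pair_inj).
apply: eq_card => -[p1 p2]; rewrite !inE /=.
case: (eqVneq p1 x) => [->|ne]; last first.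
  by apply/esym/negbTE/imsetP => -[y _ [e _]]; rewrite e eqxx in ne.
rewrite (mem_imset _ _ pair_inj) !inE.
by case: (eqVneq p2 x) => [->|_]; rewrite ?ltnn ?andbF.
Qed.

Lemma wedge_mvecE (v : 'rV[rat]_m) W S :
  wedge (mvec v) W S = \sum_(x in S) (-1) ^+ setpos S x * v 0 x * W (S :\ x).
Proof.
rewrite wedgeE; under eq_bigr => A _ do rewrite ffunE big_distrr big_distrl /=.
rewrite (exchange_big_dep (mem S)) /=; last first.
  by move=> A j AS /eqP e; move: AS; rewrite e sub1set.
apply: eq_bigr => x xS; rewrite (big_pred1 [set x]) ?shuffle_signE ?shuffle_inv1 //.
by move=> A /=; rewrite andbC; case: (eqVneq A [set x]) => [->|]; rewrite ?sub1set ?xS.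
Qed.

Lemma setpos_lt_card S x : x \in S -> (setpos S x < #|S|)%N.
Proof.
move=> xS; apply: proper_card; rewrite properE; apply/andP; split.
  by apply/subsetP => p; rewrite inE => /andP[].
by apply/subsetPn; exists x => //; rewrite inE ltnn andbF.
Qed.

Lemma setposD1 S x y : y \in S -> y != x ->
  setpos S y = (setpos (S :\ x) y + ((x \in S) && (x < y)%N))%N.
Proof.
move=> yS nyx; rewrite /setpos (cardsD1 x [set p in S | (p < y)%N]) addnC.
by congr (_ + _)%N; [apply: eq_card => p; rewrite !inE andbA | rewrite inE].
Qed.

Lemma setpos_leD1 S x (y : 'I_m) : x \in S -> (x < y)%N ->
  (setpos S x <= setpos (S :\ x) y)%N.
Proof.
move=> xS xy; apply: subset_leq_card; apply/subsetP => p; rewrite !inE => /andP[pS px].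
by rewrite pS (ltn_trans px xy) !andbT; apply: contraTneq px => ->; rewrite ltnn.
Qed.

Lemma setposD1_lt S (x y : 'I_m) : y \in S -> (y < x)%N ->
  (setpos (S :\ x) y < setpos S x)%N.
Proof.
move=> yS yx; apply: proper_card; rewrite properE; apply/andP; split.
  by apply/subsetP => p; rewrite !inE => /andP[/andP[_ pS] py]; rewrite pS (ltn_trans py yx).
by apply/subsetPn; exists y; rewrite !inE ?yS ?yx // ltnn !andbF.
Qed.

Lemma wedge_rows0 (M : 'M[rat]_(0, m)) : wedge_rows M = mv1 m.
Proof. by rewrite /wedge_rows enum_ord0. Qed.

Lemma wedge_rowsS k (M : 'M[rat]_(k.+1, m)) :
  wedge_rows M = wedge (mvec (row 0 M)) (wedge_rows (row' 0 M)).
Proof.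
rewrite /wedge_rows enum_ordSl /= -map_comp; congr (wedge _ (wedge_seq _)).
by apply: eq_map => i /=; apply/rowP => j; rewrite !mxE.
Qed.

Definition minor k (M : 'M[rat]_(k, m)) S : 'M[rat]_k :=
  \matrix_(i, j) \sum_(x in S | setpos S x == j) M i x.

Lemma wedge_rowsE k (M : 'M[rat]_(k, m)) S :
  wedge_rows M S = if #|S| == k then \det (minor M S) else 0.
Proof.
elim: k M S => [|k IH] M S.
  by rewrite wedge_rows0 ffunE det_mx00 cards_eq0; case: (S == set0).
rewrite wedge_rowsS wedge_mvecE; under eq_bigr => x xS do rewrite IH.
case: (eqVneq #|S| k.+1) => hS; last first.
  apply: big1 => x xS; rewrite (_ : (#|S :\ x| == k) = false) ?mulr0 //.
  by apply: contra_neqF hS => /eqP h; rewrite (cardsD1 x) xS h.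
have cardD1 x : x \in S -> #|S :\ x| == k.
  by move=> xS; move: hS; rewrite (cardsD1 x) xS add1n => -[->].
under eq_bigr => x xS do rewrite mxE cardD1 //.
rewrite (expand_det_row _ 0); under [RHS]eq_bigr => j _ do rewrite mxE big_distrl /=.
rewrite (exchange_big_dep (mem S)) /=; last by move=> j x _ /andP[].
apply: eq_bigr => x xS; have rlt : (setpos S x < k.+1)%N by rewrite -hS setpos_lt_card.
rewrite (big_pred1 (inord (setpos S x))); last first.
  move=> j /=; rewrite xS /=; apply/eqP/eqP => [e|->]; last by rewrite inordK.
  by apply: val_inj; rewrite /= inordK.
rewrite /cofactor inordK // add0n mulrA [M 0 x * _]mulrC; congr (_ * \det _).
apply/matrixP => i j; rewrite !mxE; under [LHS]eq_bigr => y _ do rewrite mxE.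
apply/esym; apply: eq_bigl => y; rewrite !inE /= /bump inordK //.
case: (eqVneq y x) => [->|nyx] /=.
  by rewrite xS /=; apply/negbTE/eqP; case: (leqP (setpos S x) j); lia.
case yS: (y \in S) => //=; rewrite (setposD1 yS nyx) xS /=.
case: (ltngtP x y) => [xy|yx|/val_inj e]; last by rewrite e eqxx in nyx.
  have := setpos_leD1 xS xy; move: (setpos _ y) (setpos S x) (nat_of_ord j) => p q r qp.
  by case: (leqP q r) => /= ?; apply/eqP/eqP; lia.
have := setposD1_lt yS yx; move: (setpos _ y) (setpos S x) (nat_of_ord j) => p q r pq.
by case: (leqP q r) => /= ?; apply/eqP/eqP; lia.
Qed.

End Minors.

Lemma card_ord_lt p n : (n <= p)%N -> #|[set i : 'I_p | (i < n)%N]| = n.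
Proof.
elim: n => [|n IH] np.
  by apply/eqP; rewrite cards_eq0; apply/eqP/setP => i; rewrite !inE.
rewrite (cardsD1 (Ordinal np)) inE ltnSn add1n; congr _.+1.
rewrite -[RHS](IH (ltnW np)); apply: eq_card => i.
by rewrite !inE ltnS -val_eqE /= ltn_neqAle andbC.
Qed.

Section WedgeRows.
Variable m : nat.
Implicit Types (S T : {set 'I_m}).

Lemma setpos_ltn S (x y : 'I_m) : x \in S -> (x < y)%N -> (setpos S x < setpos S y)%N.
Proof.
move=> xS xy; apply: proper_card; rewrite properE; apply/andP; split.
  by apply/subsetP => p; rewrite !inE => /andP[pS px]; rewrite pS (ltn_trans px xy).
by apply/subsetPn; exists x; rewrite !inE ?xS ?xy // ltnn andbF.
Qed.

Lemma setpos_inj S : {in S &, injective (setpos S)}.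
Proof.
move=> x y xS yS e; case: (ltngtP x y) => [h|h|/val_inj //].
  by have := setpos_ltn xS h; rewrite e ltnn.
by have := setpos_ltn yS h; rewrite e ltnn.
Qed.

Lemma setpos_setT (x : 'I_m) : setpos [set: 'I_m] x = x.
Proof.
by rewrite /setpos -[RHS](card_ord_lt (ltnW (ltn_ord x))); apply: eq_card => p; rewrite !inE.
Qed.

Lemma setpos_onto S j : (j < #|S|)%N -> exists2 x, x \in S & setpos S x = j.
Proof.
move=> jS; have [] := @uniq_min_size _ [seq setpos S x | x in S] (iota 0 #|S|).
- by rewrite map_inj_in_uniq ?enum_uniq // => x y; rewrite !mem_enum; apply: setpos_inj.
- by move=> y /mapP[x]; rewrite mem_enum => xS ->; rewrite mem_iota setpos_lt_card.
- by rewrite size_map size_iota -cardE.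
by move=> _ /(_ j); rewrite mem_iota jS => /mapP[x]; rewrite mem_enum => xS ->; exists x.
Qed.

Definition mx_of_seq n (s : seq 'rV[rat]_m) : 'M[rat]_(n, m) :=
  \matrix_(i < n, j < m) (nth 0 s i) 0 j.

Lemma wedge_rows_mx_of_seq n s : size s = n -> wedge_rows (mx_of_seq n s) = wedge_seq s.
Proof.
move=> <-; rewrite /wedge_rows; congr wedge_seq.
transitivity [seq nth 0 s i | i <- iota 0 (size s)]; last by rewrite map_nth_iota0 // take_size.
rewrite -val_enum_ord -map_comp.
by apply: eq_map => i /=; apply/rowP => j; rewrite !mxE.
Qed.

Lemma mx_of_seq_cat k l (s t : seq 'rV[rat]_m) : size s = k -> size t = l ->
  mx_of_seq (k + l) (s ++ t) = col_mx (mx_of_seq k s) (mx_of_seq l t).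
Proof.
move=> hs ht; apply/matrixP => i j; rewrite !mxE.
by case: splitP => i' ->; rewrite !mxE nth_cat hs ?ltn_ord // ltnNge leq_addr addKn.
Qed.

Lemma mx_of_seq_submx n (s : seq 'rV[rat]_m) p (B : 'M[rat]_(p, m)) :
  {in s, forall v, (v <= B)%MS} -> (mx_of_seq n s <= B)%MS.
Proof.
move=> sB; apply/row_subP => i.
have -> : row i (mx_of_seq n s) = nth 0 s i by apply/rowP => j; rewrite !mxE.
case: (ltnP i (size s)) => hi; first by rewrite sB ?mem_nth.
by rewrite nth_default ?sub0mx.
Qed.

Lemma wedge_rows_setT (M : 'M[rat]_m) : wedge_rows M setT = \det M.
Proof.
rewrite wedge_rowsE cardsT card_ord eqxx; congr (\det _); apply/matrixP => i j; rewrite mxE.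
by rewrite (big_pred1 j) // => x; rewrite inE setpos_setT.
Qed.

Lemma wedge_rows_mulmx k (C : 'M[rat]_k) (W : 'M[rat]_(k, m)) :
  wedge_rows (C *m W) = mv_scale (\det C) (wedge_rows W).
Proof.
apply/ffunP => S; rewrite ffunE !wedge_rowsE.
have -> : minor (C *m W) S = C *m minor W S.
  apply/matrixP => i j; rewrite !mxE; under eq_bigr => x _ do rewrite mxE.
  rewrite exchange_big; apply: eq_bigr => l _; rewrite mxE big_distrr.
  by apply: eq_bigr.
by rewrite det_mulmx; case: (#|S| == k); rewrite ?mulr0.
Qed.

Lemma wedge_rows_submx k (M W : 'M[rat]_(k, m)) :
  (M <= W)%MS -> exists d, wedge_rows M = mv_scale d (wedge_rows W).
Proof. by case/submxP=> D ->; exists (\det D); apply: wedge_rows_mulmx. Qed.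

Definition coord_rows S : seq 'rV[rat]_m :=
  [seq \row_(x < m) ((x \in S) && (setpos S x == i))%:R | i <- iota 0 #|S|].

Lemma size_coord_rows S : size (coord_rows S) = #|S|.
Proof. by rewrite size_map size_iota. Qed.

Lemma nth_coord_rows S i (x : 'I_m) : (i < #|S|)%N ->
  (nth 0 (coord_rows S) i) 0 x = ((x \in S) && (setpos S x == i))%:R.
Proof. by move=> hi; rewrite (nth_map 0%N) ?size_iota // nth_iota // mxE. Qed.

Lemma wedge_coord_rows S : wedge_seq (coord_rows S) = basis_mv S.
Proof.
rewrite -(wedge_rows_mx_of_seq (size_coord_rows S)).
apply/ffunP => T; rewrite wedge_rowsE ffunE.
have minor_entry U i j : minor (mx_of_seq #|S| (coord_rows S)) U i j =
    \sum_(x in U | setpos U x == j) ((x \in S) && (setpos S x == i))%:R.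
  by rewrite mxE; apply: eq_bigr => x _; rewrite mxE nth_coord_rows.
case: (eqVneq T S) => [->|nTS].
  rewrite eqxx (_ : minor _ S = 1%:M) ?det1 //; apply/matrixP => i j.
  have [x xS xj] := setpos_onto (ltn_ord j).
  rewrite minor_entry mxE (big_pred1 x) /= ?xS ?xj 1?eq_sym // => y.
  apply/andP/eqP => [[yS /eqP yj]|->]; last by rewrite xS xj.
  by apply: (setpos_inj yS xS); rewrite xj yj.
case: (eqVneq #|T| #|S|) => hT //=.
have /subsetPn[t tT tS] : ~~ (T \subset S).
  by apply: contra nTS => TS; apply/eqP/setP; apply/subset_cardP.
have rt : (setpos T t < #|S|)%N by rewrite -hT setpos_lt_card.
rewrite (expand_det_col _ (Ordinal rt)) big1 // => i _; rewrite minor_entry.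
by rewrite big1 ?mul0r // => x /andP[xT /eqP/(setpos_inj xT tT) ->]; rewrite (negbTE tS).
Qed.

End WedgeRows.

Section Hodge.
Variable m : nat.
Implicit Types (S : {set 'I_m}) (u v : mv m).

Lemma pairing_basisr u S : pairing u (basis_mv S) = u S.
Proof.
rewrite /pairing (bigD1 S) //= big1 ?addr0 => [|T /negbTE nTS]; rewrite ffunE ?nTS ?mulr0 //.
by rewrite eqxx mulr1.
Qed.

Lemma pairing_basisl u S : pairing (basis_mv S) u = u S.
Proof.
rewrite /pairing (bigD1 S) //= big1 ?addr0 => [|T /negbTE nTS]; rewrite ffunE ?nTS ?mul0r //.
by rewrite eqxx mul1r.
Qed.

Lemma wedge_setT u v :
  wedge u v setT = \sum_(A : {set 'I_m}) shuffle_sign A (~: A) * u A * v (~: A).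
Proof. by rewrite wedgeE; apply: eq_big => [A|A _]; rewrite ?subsetT ?setTD. Qed.

Lemma hodgeE u S : hodge u S = shuffle_sign (~: S) S * u (~: S).
Proof.
rewrite ffunE pairing_basisr wedge_setT (bigD1 (~: S)) //= big1 ?addr0 => [|A nAS].
  by rewrite setCK ffunE eqxx mulr1.
by rewrite ffunE (_ : (~: A == S) = false) ?mulr0 //; apply: contraNF nAS => /eqP <-; rewrite setCK.
Qed.

Lemma wedge_hodge_setT u v : wedge u (hodge v) setT = pairing u v.
Proof.
rewrite wedge_setT; apply: eq_bigr => A _; rewrite hodgeE setCK !shuffle_signE.
by rewrite mulrCA !mulrA -exprD addnn -mul2n exprM sqrrN expr1n mul1r mulrC.
Qed.

Lemma pairing_hodgel u v : pairing (hodge u) v = wedge u v setT.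
Proof.
rewrite wedge_setT /pairing (reindex_inj (@setC_inj _)) /=.
by apply: eq_bigr => A _; rewrite hodgeE setCK.
Qed.

Lemma hodgeZ c u : hodge (mv_scale c u) = mv_scale c (hodge u).
Proof. by apply/ffunP => S; rewrite [RHS]ffunE !hodgeE ffunE mulrCA. Qed.

End Hodge.

Section DualBases.
Variable m : nat.
Implicit Types (ps qs : seq 'rV[rat]_m).

Definition dual_bases ps qs := forall i j, (i < m)%N -> (j < m)%N ->
  (nth 0 ps i *m (nth 0 qs j)^T) 0 0 = (i == j)%:R.

Lemma dual_bases_exist ps : size ps = m -> mx_of_seq m ps \in unitmx ->
  exists2 qs, size qs = m & dual_bases ps qs.
Proof.
move=> sps Pu; exists [seq row i (invmx (mx_of_seq m ps))^T | i <- enum 'I_m].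
  by rewrite size_map size_enum_ord.
move=> i j im jm; have /matrixP/(_ (Ordinal im) (Ordinal jm)) := mulmxV Pu.
rewrite !mxE => <-; apply: eq_bigr => x _.
rewrite [_^T _ _]mxE (nth_map (Ordinal jm)) ?size_enum_ord //.
have -> : nth (Ordinal jm) (enum 'I_m) j = Ordinal jm by apply: val_inj; rewrite /= nth_enum_ord.
by rewrite !mxE.
Qed.

Lemma dual_bases_rot b ps qs : size ps = m -> size qs = m -> (b <= m)%N ->
  dual_bases ps qs -> dual_bases (rot b ps) (rot b qs).
Proof.
move=> sps sqs bm dual i j im jm.
have nth_rot (s : seq 'rV[rat]_m) k : size s = m -> (k < m)%N ->
    nth 0 (rot b s) k = nth 0 s (if (k < m - b)%N then b + k else k - (m - b))%N.
  move=> ss km; rewrite nth_cat size_drop ss.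
  by case: ifP => h; rewrite ?nth_drop // nth_take //; lia.
rewrite !nth_rot // dual; try by case: ifP; lia.
by congr (nat_of_bool _)%:R; do 2 case: ifP => ?; apply/eqP/eqP; lia.
Qed.

Lemma mx_of_seq_drop_dual ps qs b n : (b + n)%N = m -> dual_bases ps qs ->
  mx_of_seq n (drop b ps) *m (mx_of_seq n (drop b qs))^T = 1%:M.
Proof.
move=> bnm dual; apply/matrixP => i j; rewrite !mxE.
have := ltn_ord i; have := ltn_ord j => jn i_n.
have -> : (i == j) = (b + i == b + j)%N by rewrite eqn_add2l.
rewrite -dual; try lia.
by rewrite [RHS]mxE; apply: eq_bigr => x _; rewrite !mxE !nth_drop.
Qed.

End DualBases.

(* The S-coordinate of the left side is det [p_1; ...; p_k; E_S] with E_S the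
   coordinate rows of S; multiplying by Q^T makes the matrix block triangular. *)
Lemma hodge_wedge_take m k l (ps qs : seq 'rV[rat]_m) : (k + l)%N = m ->
  size ps = m -> size qs = m -> dual_bases ps qs ->
  hodge (wedge_seq (take k ps)) = mv_scale (\det (mx_of_seq m ps)) (wedge_seq (drop k qs)).
Proof.
move=> klm sps sqs dual; subst m.
have stk : size (take k ps) = k by rewrite size_takel // sps leq_addr.
have sdq : size (drop k qs) = l by rewrite size_drop sqs addKn.
apply/ffunP => S; rewrite [RHS]ffunE.
case: (eqVneq #|S| l) => hS; last first.
  rewrite hodgeE -(wedge_rows_mx_of_seq stk) -(wedge_rows_mx_of_seq sdq) !wedge_rowsE.
  rewrite (negbTE hS) mulr0 (_ : (#|~: S| == k) = false) ?mulr0 //.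
  by apply: contraNF hS => /eqP hk; move: (cardsC S); rewrite hk card_ord addnC => /addnI ->.
rewrite ffunE pairing_basisr -wedge_coord_rows -wedge_seq_cat.
rewrite -(wedge_rows_mx_of_seq (n := k + l)); last by rewrite size_cat stk size_coord_rows hS.
rewrite wedge_rows_setT mx_of_seq_cat ?size_coord_rows //.
rewrite -(wedge_rows_mx_of_seq sdq) wedge_rowsE hS eqxx.
set P := mx_of_seq (k + l) ps; set Q := mx_of_seq (k + l) qs.
set U := mx_of_seq k _; set E := mx_of_seq l _.
have PQ : P *m Q^T = 1%:M by have := mx_of_seq_drop_dual (add0n _) dual; rewrite !drop0.
have detPQ : \det P * \det Q = 1 by rewrite -[\det Q]det_tr -det_mulmx PQ det1.
have UQ : U *m Q^T = row_mx 1%:M 0.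
  have -> : U = usubmx P by apply/matrixP => i j; rewrite !mxE nth_take.
  by rewrite mul_usub_mx PQ scalar_mx_block block_mxEv col_mxKu.
have detUE : \det (col_mx U E) * \det Q = \det (E *m rsubmx Q^T).
  rewrite -[\det Q]det_tr -det_mulmx -{1}[Q^T]hsubmxK mul_col_row.
  by rewrite mulmx_lsub mulmx_rsub UQ row_mxKl row_mxKr det_lblock det1 mul1r.
have -> : minor (mx_of_seq l (drop k qs)) S = (E *m rsubmx Q^T)^T.
  apply/matrixP => i j; rewrite !mxE big_mkcond /=; apply: eq_bigr => x _.
  rewrite /E !mxE nth_coord_rows ?hS // nth_drop.
  by case: (x \in S); case: (setpos S x == j); rewrite ?mul1r ?mul0r.
by rewrite det_tr -detUE mulrCA detPQ mulr1.
Qed.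

(* drop b ps is a prefix of rot b ps, whose dual basis is rot b qs. *)
Lemma wedge_hodge_take_drop m (ps : seq 'rV[rat]_m) b c :
  (b + c <= m)%N -> size ps = m -> mx_of_seq m ps \in unitmx ->
  wedge (hodge (wedge_seq (take (b + c) ps))) (hodge (wedge_seq (drop b ps))) =
  mv_scale (\det (mx_of_seq m ps)) (hodge (wedge_seq (take c (drop b ps)))).
Proof.
move=> bcm sps Pu; have [qs sqs dual] := dual_bases_exist sps Pu.
have dual_rot := dual_bases_rot sps sqs (leq_trans (leq_addr c b) bcm) dual.
have size_rot_ps : size (rot b ps) = m by rewrite size_rot.
have size_rot_qs : size (rot b qs) = m by rewrite size_rot.
have take_rot n : (n <= m - b)%N -> take n (rot b ps) = take n (drop b ps).
  move=> nmb; rewrite /rot take_cat size_drop sps; case: ltnP => // h.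
  by rewrite (_ : n - (m - b) = 0)%N ?take0 ?cats0 ?take_oversize ?size_drop ?sps //; lia.
have drop_rot_qs : drop c (rot b qs) = drop (b + c) qs ++ take b qs.
  rewrite /rot drop_cat size_drop sqs; case: ltnP => h; first by rewrite drop_drop addnC.
  by rewrite (_ : c - (m - b) = 0)%N ?drop0 ?drop_oversize ?sqs //; lia.
have hodge_prefix : hodge (wedge_seq (take (b + c) ps)) =
    mv_scale (\det (mx_of_seq m ps)) (wedge_seq (drop (b + c) qs)).
  by apply: (hodge_wedge_take (l := m - (b + c))); rewrite // subnKC.
have hodge_suffix : hodge (wedge_seq (drop b ps)) =
    mv_scale (\det (mx_of_seq m (rot b ps))) (wedge_seq (take b qs)).
  rewrite -[drop b ps]take_size size_drop sps -take_rot //.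
  rewrite (hodge_wedge_take (l := b) _ size_rot_ps size_rot_qs dual_rot); last lia.
  by rewrite /rot drop_size_cat // size_drop sqs.
have hodge_middle : hodge (wedge_seq (take c (drop b ps))) =
    mv_scale (\det (mx_of_seq m (rot b ps))) (wedge_seq (drop (b + c) qs ++ take b qs)).
  rewrite -take_rot; last lia.
  rewrite (hodge_wedge_take (l := m - c) _ size_rot_ps size_rot_qs dual_rot) ?drop_rot_qs //.
  lia.
rewrite hodge_prefix hodge_suffix hodge_middle wedge_seq_cat.
by rewrite wedgeZl wedgeZr !mv_scaleA mulrC.
Qed.

Lemma pairing_omega_star_hodge m (x y z u : mv m) :
  wedge (hodge x) (hodge y) = hodge u ->
  pairing (omega_star m) (wedge (hodge x) (wedge (hodge y) (hodge z))) = wedge u z setT.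
Proof.
by move=> xyu; rewrite pairing_basisl -wedgeA xyu wedge_hodge_setT pairing_hodgel.
Qed.

Lemma sum_sqr_mv_neq0 m (w : mv m) : w != 0 -> \sum_(S : {set 'I_m}) w S ^+ 2 != 0.
Proof.
apply: contraNneq => /eqP; rewrite psumr_eq0 => [/allP w0|S _]; last exact: sqr_ge0.
apply/eqP/ffunP => S; rewrite ffunE; apply/eqP; rewrite -sqrf_eq0.
by have := w0 S; rewrite mem_index_enum => /(_ isT).
Qed.

(* The square d * d keeps the identity true for d = 0, where x / 0 = 0. *)
Lemma vol_eval_scale m (w : mv m) (d e t : rat) : w != 0 ->
  vol_eval (mv_scale d w) (d * d * t) (mv_scale e w) = d * e * t.
Proof.
move=> w0; rewrite /vol_eval; set Q := \sum_(S : {set 'I_m}) w S ^+ 2.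
rewrite -big_distrl /=.
rewrite (eq_bigr (fun S => e * d * w S ^+ 2)); last by move=> S _; rewrite !ffunE; ring.
rewrite [X in _ / X](eq_bigr (fun S => d ^+ 2 * w S ^+ 2)); last first.
  by move=> S _; rewrite !ffunE; ring.
rewrite -!big_distrr /= -/Q.
have Q0 : Q != 0 by apply: sum_sqr_mv_neq0.
case: (eqVneq d 0) => [->|d0]; first by rewrite !mul0r.
by field; rewrite Q0 d0.
Qed.

Section BasisSegments.
Variables (m : nat) (fv : nat -> 'rV[rat]_m).

Definition fseg s k := [seq fv i | i <- iota s.+1 k].
Definition hseg s k := rev (fseg s k).

Lemma size_fseg s k : size (fseg s k) = k.
Proof. by rewrite size_map size_iota. Qed.

Lemma size_hseg s k : size (hseg s k) = k.
Proof. by rewrite size_rev size_fseg. Qed.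

Lemma fsegD s k l : fseg s (k + l) = fseg s k ++ fseg (s + k) l.
Proof. by rewrite /fseg iotaD map_cat addSn. Qed.

Lemma hsegD s k l : hseg s (k + l) = hseg (s + k) l ++ hseg s k.
Proof. by rewrite /hseg fsegD rev_cat. Qed.

Lemma take_fseg s k l : (k <= l)%N -> take k (fseg s l) = fseg s k.
Proof. by move=> kl; rewrite -(subnKC kl) fsegD take_size_cat ?size_fseg. Qed.

Lemma drop_fseg s k l : drop k (fseg s l) = fseg (s + k) (l - k).
Proof. by rewrite /fseg -map_drop drop_iota addSn. Qed.

End BasisSegments.

Lemma decorated_flag_submx m (G : forall k : nat, 'M[rat]_(k, m)) j k :
  decorated_flag G -> (j <= k <= m)%N -> (G j <= G k)%MS.
Proof.
case=> _ Gnest _ /andP[]; elim: k => [|k IH]; first by rewrite leqn0 => /eqP ->.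
rewrite leq_eqVlt => /orP[/eqP -> _|/IH jk km]; first exact: submx_refl.
exact: submx_trans (jk (ltnW km)) (Gnest _ km).
Qed.

Section FlagTriple.
Variables (m : nat) (F G H : forall k : nat, 'M[rat]_(k, m)) (fv hv : nat -> 'rV[rat]_m).
Hypotheses (flagF : decorated_flag F) (flagG : decorated_flag G).
Hypotheses (basisFG : FG_basis F G fv) (basisGH : GH_basis G H hv).

Lemma dec_F_fseg k : (k <= m)%N -> dec F k = wedge_seq (fseg fv 0 k).
Proof.
by case: k => [_|k km]; [rewrite /dec wedge_rows0 | have [_ _ <-] := @basisFG k.+1 km].
Qed.

Lemma dec_H_hseg k : (k <= m)%N -> dec H k = wedge_seq (hseg hv 0 k).
Proof.
by case: k => [_|k km]; [rewrite /dec wedge_rows0 | have [_ _ <-] := @basisGH k.+1 km].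
Qed.

Lemma dec_HD k l : (k + l <= m)%N -> dec H (k + l) = wedge (h_s hv k l) (dec H k).
Proof.
by move=> klm; rewrite !dec_H_hseg ?(leq_trans (leq_addr l k)) // hsegD wedge_seq_cat.
Qed.

Lemma det_fseg : \det (mx_of_seq m (fseg fv 0 m)) = 1.
Proof.
rewrite -wedge_rows_setT wedge_rows_mx_of_seq ?size_fseg // -dec_F_fseg //.
by case: flagF => _ _; rewrite pairing_basisr.
Qed.

Lemma unitmx_fseg : mx_of_seq m (fseg fv 0 m) \in unitmx.
Proof. by rewrite unitmxE det_fseg unitr1. Qed.

Lemma wedge_dec_F_fseg_setT b : (b <= m)%N ->
  wedge (dec F b) (wedge_seq (fseg fv b (m - b))) setT = 1.
Proof.
move=> bm; rewrite dec_F_fseg // -wedge_seq_cat -(fsegD fv 0 b) subnKC //.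
by rewrite -dec_F_fseg //; case: flagF => _ _; rewrite pairing_basisr.
Qed.

Lemma hodge_dec_F_wedge b c : (b + c <= m)%N ->
  wedge (hodge (dec F (b + c))) (hodge (wedge_seq (fseg fv b (m - b)))) = hodge (f_s fv b c).
Proof.
move=> bcm; have := wedge_hodge_take_drop bcm (size_fseg fv 0 m) unitmx_fseg.
rewrite det_fseg mv_scale1 drop_fseg take_fseg ?take_fseg ?dec_F_fseg //; lia.
Qed.

Section Span.
Variables b n : nat.
Hypothesis bnm : (b + n)%N = m.

Lemma fv_sub_G i : (b < i <= m)%N -> (fv i <= G n)%MS.
Proof.
move=> bim; have [|_ fvG _] := @basisFG i; first lia.
by apply: submx_trans fvG (decorated_flag_submx flagG _); lia.
Qed.

Lemma hv_sub_G i : (b < i <= m)%N -> (hv i <= G n)%MS.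
Proof.
move=> bim; have [|hvG _ _] := @basisGH i; first lia.
by apply: submx_trans hvG (decorated_flag_submx flagG _); lia.
Qed.

Lemma G_sub_fseg : (G n <= mx_of_seq n (fseg fv b n))%MS.
Proof.
set W := mx_of_seq n _.
have WG : (W <= G n)%MS.
  by apply: mx_of_seq_submx => v /mapP[i]; rewrite mem_iota => ? ->; apply: fv_sub_G; lia.
have [qs sqs dual] := dual_bases_exist (size_fseg fv 0 m) unitmx_fseg.
have rankW : (n <= \rank W)%N.
  apply: (@mulmx1_min_rank _ _ _ _ _ 1%:M (mx_of_seq n (drop b qs))^T).
  by rewrite mul1mx /W -(mx_of_seq_drop_dual bnm dual) drop_fseg (_ : m - b = n)%N //; lia.
rewrite -(mxrank_leqif_sup WG).2 eqn_leq mxrankS //=.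
exact: leq_trans (rank_leq_row _) rankW.
Qed.

Lemma G_span (M : 'M[rat]_(n, m)) : (M <= G n)%MS ->
  exists d, wedge_rows M = mv_scale d (wedge_seq (fseg fv b n)).
Proof.
move=> MG; rewrite -(wedge_rows_mx_of_seq (size_fseg fv b n)).
exact/wedge_rows_submx/(submx_trans MG)/G_sub_fseg.
Qed.

End Span.

Section Coordinates.
Variables a b c : nat.
Hypothesis abcm : (a + b + c)%N = m.
Let w := wedge_seq (fseg fv b (c + a)).
Variables dg dy : rat.
Hypothesis dec_G_span : dec G (c + a) = mv_scale dg w.
Hypothesis fh_span : wedge (f_s fv b c) (h_s hv b a) = mv_scale dy w.

Lemma Delta_star_span : Delta_star F G H a b c = dg * dy * wedge w (dec H b) setT.
Proof.
rewrite /Delta_star.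
have [-> -> ->] : [/\ m - a = b + c, m - b = c + a & m - c = b + a]%N by split; lia.
rewrite (@pairing_omega_star_hodge _ _ _ _ (mv_scale dg (f_s fv b c))); last first.
  rewrite dec_G_span hodgeZ wedgeZr /w (_ : c + a = m - b)%N; last lia.
  by rewrite hodge_dec_F_wedge ?hodgeZ //; lia.
rewrite dec_HD; last lia.
by rewrite wedgeZl mv_scaleE -wedgeA fh_span wedgeZl mv_scaleE mulrA.
Qed.

Lemma wedge_dec_F_w_setT : wedge (dec F b) w setT = 1.
Proof. by rewrite /w (_ : c + a = m - b)%N ?wedge_dec_F_fseg_setT //; lia. Qed.

Lemma w_neq0 : w != 0.
Proof.
apply/eqP => w0; have := wedge_dec_F_w_setT; rewrite w0 wedgeE big1 => [/esym/eqP|A _].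
  by rewrite oner_eq0.
by rewrite ffunE mulr0.
Qed.

Lemma Delta_s_span : Delta_s F G H fv hv b c 0 a = dg * dy * wedge w (dec H b) setT.
Proof.
rewrite /Delta_s /= (_ : m - b = c + a)%N; last lia.
rewrite dec_G_span (_ : dec G 0 = mv1 m) ?wedge1l ?fh_span; last exact: wedge_rows0.
rewrite /omega !pairing_basisr wedgeZr wedgeZl !mv_scaleE wedge_dec_F_w_setT mulr1 mulrA.
by rewrite vol_eval_scale // w_neq0.
Qed.

End Coordinates.

End FlagTriple.

Theorem lemma6p25p15 (m : nat) (F G H : forall k : nat, 'M[rat]_(k, m))
    (fv hv : nat -> 'rV[rat]_m) :
  decorated_flag F -> decorated_flag G -> decorated_flag H ->
  generic_triple F G H ->
  FG_basis F G fv -> GH_basis G H hv ->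
  forall a b c : nat, (a + b + c)%N = m ->
    (a, b, c) \notin [:: (m, 0, 0); (0, m, 0); (0, 0, m)]%N ->
    Delta_star F G H a b c = Delta_s F G H fv hv b c 0 a.
Proof.
move=> flagF flagG _ _ basisFG basisGH a b c abcm _.
have bnm : (b + (c + a))%N = m by lia.
have [dg dgE] := G_span flagF flagG basisFG bnm (submx_refl (G (c + a))).
have [dy dyE] : exists dy, wedge (f_s fv b c) (h_s hv b a) =
    mv_scale dy (wedge_seq (fseg fv b (c + a))).
  rewrite -wedge_seq_cat -(wedge_rows_mx_of_seq (n := c + a)); last first.
    by rewrite size_cat size_fseg size_hseg.
  apply: (G_span flagF flagG basisFG bnm); apply: mx_of_seq_submx => v.
  rewrite mem_cat mem_rev => /orP[] /mapP[i]; rewrite mem_iota => ? ->.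
    by apply: (fv_sub_G flagG basisFG bnm); lia.
  by apply: (hv_sub_G flagG basisGH bnm); lia.
by rewrite (Delta_star_span flagF basisFG basisGH abcm dgE dyE)
  (Delta_s_span H flagF basisFG abcm dgE dyE).
Qed.
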